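(* Let $n\ge1$, $R>0$, and let $f\colon\mathbb{R}^n\to(0,\infty)$ be a twice continuously differentiable convex function with $|t|^2+f(t)^2>R^2$ for all $t\in\mathbb{R}^n$. Let $$\alpha(t)=\frac{\langle t,\nabla f(t)\rangle-f(t)}{\sqrt{1+|\nabla f(t)|^2}},\qquad D=\{t\in\mathbb{R}^n\mid\alpha(t)<R\}.$$ Then the map $x\colon D\to\mathbb{R}^n$, $$x(t)=t+\frac{1}{2\sqrt{1+|\nabla f(t)|^2}}\cdot\frac{|t|^2+f(t)^2-R^2}{R-\alpha(t)}\,\nabla f(t),$$ is a bijection from $D$ onto $\mathbb{R}^n$ whose Jacobian determinant vanishes nowhere on $D$.
   Context: $\langle\cdot,\cdot\rangle$ and $|\cdot|$ are the Euclidean inner product and norm on $\mathbb{R}^n$. *)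

From HB Require Import structures.
From mathcomp Require Import all_boot all_order all_algebra.
From mathcomp Require Import all_classical all_reals all_analysis.
Set Implicit Arguments. Unset Strict Implicit. Unset Printing Implicit Defensive.
Import Order.TTheory GRing.Theory Num.Theory.
Import numFieldNormedType.Exports.
Local Open Scope classical_set_scope.
Local Open Scope ring_scope.

Definition dotv {R : realType} {n : nat} (u v : 'rV[R]_n) : R :=
  \sum_(i < n) u 0 i * v 0 i.

Definition sqnorm {R : realType} {n : nat} (u : 'rV[R]_n) : R := dotv u u.

Definition gradient {R : realType} {n : nat} (f : 'rV[R]_n -> R^o)
    (t : 'rV[R]_n) : 'rV[R]_n :=
  \row_(i < n) ('D_(delta_mx 0 i) f t : R).

Definition C2 {R : realType} {n : nat} (f : 'rV[R]_n -> R^o) : Prop :=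
  (forall t, differentiable f t) /\
  (forall t, differentiable (gradient f) t) /\
  continuous (fun t => 'J (gradient f) t).

Definition alpha {R : realType} {n : nat} (f : 'rV[R]_n -> R^o)
    (t : 'rV[R]_n) : R :=
  (dotv t (gradient f t) - f t) / Num.sqrt (1 + sqnorm (gradient f t)).

Definition xmap {R : realType} {n : nat} (Rr : R) (f : 'rV[R]_n -> R^o)
    (t : 'rV[R]_n) : 'rV[R]_n :=
  t + ((1 / (2 * Num.sqrt (1 + sqnorm (gradient f t)))) *
       ((sqnorm t + f t ^+ 2 - Rr ^+ 2) / (Rr - alpha f t))) *: gradient f t.

(* Write x(t) = t + k(t) grad f(t), h(t) = f(t) - k(t) and
   rho(t) = k(t) sqrt(1 + |grad f(t)|^2).  The point c(t) = (x(t), h(t)) of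
   R^(n+1) lies on the downward normal of the graph of f at (t, f(t)), at
   distance rho(t), and |c(t)| = R + rho(t): the ball of radius rho(t) around
   c(t) touches the graph at (t, f(t)) and the sphere of radius R from outside.
   By convexity every point (u, z) of the epigraph satisfies
   |c(t) - (u, z)|^2 >= rho(t)^2 + |u - t|^2.

   Injectivity: if x(t1) = x(t2) and h(t1) <= h(t2), lifting (t1, f(t1)) by
   h(t2) - h(t1) gives a point of the epigraph at distance rho(t1) from c(t2),
   so rho(t2)^2 + |t1 - t2|^2 <= rho(t1)^2; comparing |c(t1)| and |c(t2)|
   through the unlifted point gives rho(t1) <= rho(t2), hence t1 = t2.

   Surjectivity: for y in R^n, h |-> dist((y, h), graph f) - |(y, h)| + R is
   continuous, positive for h very negative and negative at h = f(y).  At a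
   zero h, a nearest point (t, f(t)) of the graph satisfies y = x(t) by the
   first-order condition, and the zero says |(y, h)| = R + rho(t).

   Jacobian: if Dx(t) v = 0, differentiating the identity
   2 k (sqrt(1 + |grad f|^2) R - <t, grad f> + f) = |t|^2 + f^2 - R^2
   along v forces D_v k = <grad f, v>, and then
   |v|^2 = - k <v, Hess f v> - <grad f, v>^2 <= 0. *)

From HB Require Import structures.
From mathcomp Require Import all_boot all_order all_algebra.
From mathcomp Require Import all_classical all_reals all_analysis.
From mathcomp Require Import ring lra.
Set Implicit Arguments. Unset Strict Implicit. Unset Printing Implicit Defensive.
Import Order.TTheory GRing.Theory Num.Theory.
Import numFieldNormedType.Exports.
Local Open Scope classical_set_scope.
Local Open Scope ring_scope.

Lemma sqrt_addr_sqr_lipschitz (R : rcfType) (a x z : R) : 0 <= a ->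
  `|Num.sqrt (a + x ^+ 2) - Num.sqrt (a + z ^+ 2)| <= `|x - z|.
Proof.
move=> a_ge0.
have ax : 0 <= a + x ^+ 2 by rewrite addr_ge0 ?sqr_ge0.
have az : 0 <= a + z ^+ 2 by rewrite addr_ge0 ?sqr_ge0.
rewrite -!sqrtr_sqr ler_sqrt ?sqr_ge0 // !sqrrB !sqr_sqrtr //.
have : a + x * z <= Num.sqrt (a + x ^+ 2) * Num.sqrt (a + z ^+ 2).
  rewrite -sqrtrM // (le_trans (ler_norm _)) // -sqrtr_sqr ler_sqrt ?mulr_ge0 //.
  rewrite -subr_ge0.
  have -> : (a + x ^+ 2) * (a + z ^+ 2) - (a + x * z) ^+ 2 = a * (x - z) ^+ 2 by ring.
  by rewrite mulr_ge0 ?sqr_ge0.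
lra.
Qed.

Section EuclideanSpace.
Variables (R : realType) (n : nat).
Local Notation V := 'rV[R]_n.

Lemma dotvC (u v : V) : dotv u v = dotv v u.
Proof. by apply: eq_bigr => i _; rewrite mulrC. Qed.
Lemma dotvDl (u v w : V) : dotv (u + v) w = dotv u w + dotv v w.
Proof. by rewrite /dotv -big_split; apply: eq_bigr => i _; rewrite !mxE mulrDl. Qed.
Lemma dotvDr (u v w : V) : dotv w (u + v) = dotv w u + dotv w v.
Proof. by rewrite dotvC dotvDl !(dotvC w). Qed.
Lemma dotvZl (a : R) (u w : V) : dotv (a *: u) w = a * dotv u w.
Proof. by rewrite /dotv mulr_sumr; apply: eq_bigr => i _; rewrite !mxE mulrA. Qed.
Lemma dotvZr (a : R) (u w : V) : dotv w (a *: u) = a * dotv w u.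
Proof. by rewrite dotvC dotvZl dotvC. Qed.
Lemma dotvNl (u w : V) : dotv (- u) w = - dotv u w.
Proof. by rewrite -scaleN1r dotvZl mulN1r. Qed.
Lemma dotvNr (u w : V) : dotv w (- u) = - dotv w u.
Proof. by rewrite dotvC dotvNl dotvC. Qed.
Lemma dotvBl (u v w : V) : dotv (u - v) w = dotv u w - dotv v w.
Proof. by rewrite dotvDl dotvNl. Qed.
Lemma dotvBr (u v w : V) : dotv w (u - v) = dotv w u - dotv w v.
Proof. by rewrite dotvDr dotvNr. Qed.
Lemma dotv0l (w : V) : dotv 0 w = 0.
Proof. by rewrite /dotv big1 // => i _; rewrite mxE mul0r. Qed.
Lemma dotv0r (w : V) : dotv w 0 = 0.
Proof. by rewrite dotvC dotv0l. Qed.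

Lemma sqnorm_ge0 (u : V) : 0 <= sqnorm u.
Proof. by apply: sumr_ge0 => i _; rewrite -expr2 sqr_ge0. Qed.
Lemma sqnorm_eq0 (u : V) : sqnorm u = 0 -> u = 0.
Proof.
move=> /eqP; rewrite /sqnorm /dotv psumr_eq0; last by move=> i _; rewrite -expr2 sqr_ge0.
move=> /allP u0; apply/rowP => i; rewrite mxE.
by have /(_ (mem_index_enum i)) := u0 i; rewrite -expr2 sqrf_eq0 => /eqP.
Qed.
Lemma sqnorm0 : sqnorm (0 : V) = 0.
Proof. exact: dotv0l. Qed.
Lemma sqnormD (u v : V) : sqnorm (u + v) = sqnorm u + 2 * dotv u v + sqnorm v.
Proof. rewrite /sqnorm dotvDl !dotvDr (dotvC v u); ring. Qed.
Lemma sqnormB (u v : V) : sqnorm (u - v) = sqnorm u - 2 * dotv u v + sqnorm v.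
Proof. rewrite /sqnorm dotvBl !dotvBr (dotvC v u); ring. Qed.
Lemma sqnormZ (a : R) (u : V) : sqnorm (a *: u) = a ^+ 2 * sqnorm u.
Proof. rewrite /sqnorm dotvZl dotvZr; ring. Qed.
Lemma sqnormN (u : V) : sqnorm (- u) = sqnorm u.
Proof. by rewrite /sqnorm dotvNl dotvNr opprK. Qed.
Lemma sqr_coord_le_sqnorm (u : V) i : u 0 i ^+ 2 <= sqnorm u.
Proof.
rewrite /sqnorm /dotv (bigD1 i) //= expr2 lerDl.
by apply: sumr_ge0 => j _; rewrite -expr2 sqr_ge0.
Qed.

End EuclideanSpace.

Section Derivatives.
Variables (R : realType) (n : nat).
Local Notation V := 'rV[R]_n.
Implicit Types (a b : V -> R^o) (F H : V -> V) (x u v : V).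

Lemma differentiable_sumr (A : 'I_n -> V -> R^o) x :
  (forall i, differentiable (A i) x) ->
  differentiable (fun z => \sum_(i < n) A i z) x.
Proof.
move=> dA; have -> : (fun z => \sum_(i < n) A i z) = \sum_(i < n) A i.
  by apply/funext => z; rewrite fct_sumE.
exact: differentiable_sum.
Qed.

Lemma differentiable_sqrt a x : differentiable a x -> 0 < a x ->
  differentiable (fun z => Num.sqrt (a z) : R^o) x.
Proof.
move=> da ax; apply: (differentiable_comp da).
by apply/derivable1_diffP; have [] := is_derive1_sqrt ax.
Qed.

Lemma differentiable_entry F i x : differentiable F x ->
  differentiable (fun z => F z 0 i : R^o) x.
Proof.
move=> dF; apply: (differentiable_comp (g := fun w : V => w 0 i : R^o) dF).
exact: differentiable_coord.
Qed.

Lemma differentiable_dotv F H x : differentiable F x -> differentiable H x ->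
  differentiable (fun z => dotv (F z) (H z) : R^o) x.
Proof.
move=> dF dH; apply: differentiable_sumr => i.
by apply: differentiableM; apply: differentiable_entry.
Qed.

Lemma deriveD_diff a b x v : differentiable a x -> differentiable b x ->
  'D_v (fun z => a z + b z) x = 'D_v a x + 'D_v b x.
Proof. by move=> da db; rewrite deriveD //; apply: diff_derivable. Qed.
Lemma deriveB_diff a b x v : differentiable a x -> differentiable b x ->
  'D_v (fun z => a z - b z) x = 'D_v a x - 'D_v b x.
Proof. by move=> da db; rewrite deriveB //; apply: diff_derivable. Qed.
Lemma deriveM_diff a b x v : differentiable a x -> differentiable b x ->
  'D_v (fun z => a z * b z) x = a x * 'D_v b x + b x * 'D_v a x.
Proof. by move=> da db; rewrite deriveM //; apply: diff_derivable. Qed.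

Lemma derive_sumr (A : 'I_n -> V -> R^o) x v :
  (forall i, differentiable (A i) x) ->
  'D_v (fun z => \sum_(i < n) A i z) x = \sum_(i < n) 'D_v (A i) x.
Proof.
move=> dA; have -> : (fun z => \sum_(i < n) A i z) = \sum_(i < n) A i.
  by apply/funext => z; rewrite fct_sumE.
by rewrite derive_sum // => i; apply: diff_derivable.
Qed.

Lemma derive_coord i x v : 'D_v (fun z : V => z 0 i : R^o) x = v 0 i.
Proof.
have := @derive_mx R V 1 n id x v (@derivable_id R V x v).
by rewrite derive_id => e; rewrite {2}e mxE.
Qed.

Lemma derive_entry F i x v : differentiable F x ->
  'D_v (fun z => F z 0 i : R^o) x = 'D_v F x 0 i.
Proof. by move=> dF; rewrite derive_mx ?mxE //; apply: diff_derivable. Qed.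

Lemma derive_dotv F H x v : differentiable F x -> differentiable H x ->
  'D_v (fun z => dotv (F z) (H z) : R^o) x =
  dotv (F x) ('D_v H x) + dotv ('D_v F x) (H x).
Proof.
move=> dF dH; rewrite /dotv (derive_sumr (A := fun i z => F z 0 i * H z 0 i)).
  rewrite -big_split /=; apply: eq_bigr => i _.
  rewrite (deriveM_diff (a := fun z => F z 0 i : R^o) (b := fun z => H z 0 i : R^o));
    try exact: differentiable_entry.
  by rewrite !derive_entry //; ring.
by move=> i; apply: differentiableM; apply: differentiable_entry.
Qed.

Lemma differentiable_sqnorm x : differentiable (fun z : V => sqnorm z : R^o) x.
Proof. exact: (@differentiable_dotv id id). Qed.
Lemma derive_sqnorm x v : 'D_v (fun z : V => sqnorm z : R^o) x = 2 * dotv x v.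
Proof. rewrite /sqnorm (derive_dotv (F := id) (H := id)) // derive_id (dotvC v); ring. Qed.

Lemma differentiable_subl (y : V) x : differentiable (fun z : V => y - z) x.
Proof. exact: (@differentiableB _ _ _ (cst y) id). Qed.
Lemma derive_subl (y : V) x v : 'D_v (fun z : V => y - z) x = - v.
Proof.
have -> : (fun z : V => y - z) = cst y - id by [].
by rewrite deriveB // derive_cst derive_id sub0r.
Qed.

Lemma derive_ge_right (A : V -> R^o) x v (c : R) : derivable A x v ->
  (forall h : R, 0 < h -> h <= 1 -> c * h <= A (h *: v + x) - A x) ->
  c <= 'D_v A x.
Proof.
move=> dA Age.
rewrite /derive (cvg_at_rightE (fun h : R => h^-1 *: (A (h *: v + x) - A x))); last exact: dA.
apply: limr_ge.
  rewrite -(cvg_at_rightE (fun h : R => h^-1 *: (A (h *: v + x) - A x))) //.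
  apply: cvg_trans dA; apply: cvg_app.
  move=> B [e e_gt0 Be]; exists e => // h he h_gt0; apply: Be => //.
  exact/lt0r_neq0.
near=> h.
have h_gt0 : 0 < h by near: h; exists 1 => /=.
have h_le1 : h <= 1.
  near: h; exists 1 => //= h; rewrite /ball /= sub0r normrN.
  by move=> /ltW /(le_trans (ler_norm _)).
by rewrite /GRing.scale /= ler_pdivlMl // mulrC Age.
Unshelve. all: by end_near. Qed.

Lemma derive_eq0_min (A : V -> R^o) x v : differentiable A x ->
  (forall h : R, A x <= A (h *: v + x)) -> 'D_v A x = 0.
Proof.
move=> dA Amin.
have ge0 w : (forall h : R, A x <= A (h *: w + x)) -> 0 <= 'D_w A x.
  move=> Awmin; apply: derive_ge_right; first exact: diff_derivable.
  by move=> h _ _; rewrite mul0r subr_ge0.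
apply/eqP; rewrite eq_le ge0 // andbT -oppr_ge0.
have <- : 'D_(- v) A x = - 'D_v A x by rewrite !deriveE // linearN.
by apply: ge0 => h; rewrite scalerN -scaleNr.
Qed.

Variable f : V -> R^o.
Hypothesis f_diff : forall x, differentiable f x.
Hypothesis f_convex : convex_function setT (f : convex_lmodType V -> R^o).

Lemma derive_gradient x v : 'D_v f x = dotv (gradient f x) v.
Proof.
rewrite deriveE // {1}(row_sum_delta v) linear_sum /= /dotv.
by apply: eq_bigr => i _; rewrite linearZ /= -deriveE // /gradient mxE mulrC.
Qed.

Lemma convex_gradient_le x u : f x + dotv (gradient f x) (u - x) <= f u.
Proof.
rewrite -derive_gradient -lerBrDl -lerN2 -deriveN; last exact: diff_derivable.
apply: derive_ge_right; first by apply: diff_derivable; apply: differentiableN.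
move=> h h_gt0 h_le1.
have := @f_convex (Itv01 (ltW h_gt0) h_le1) u x; rewrite !inE => /(_ I I) cvx.
have {cvx} : f (h *: u + (1 - h) *: x) <= h * f u + (1 - h) * f x := cvx.
have -> : h *: u + (1 - h) *: x = h *: (u - x) + x.
  by rewrite scalerBr scalerBl scale1r addrA addrAC.
by rewrite !opprfctE; lra.
Qed.

Lemma gradient_monotone x u : 0 <= dotv (gradient f u - gradient f x) (u - x).
Proof.
have := convex_gradient_le x u; have := convex_gradient_le u x.
rewrite dotvBl -opprB dotvNr; lra.
Qed.

Lemma hessian_psd x v : differentiable (gradient f) x ->
  0 <= dotv v ('D_v (gradient f) x).
Proof.
move=> dg.
have <- : 'D_v (fun z => dotv v (gradient f z) : R^o) x = dotv v ('D_v (gradient f) x).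
  by rewrite (derive_dotv (F := cst v)) // derive_cst dotv0l addr0.
apply: derive_ge_right; first by apply: diff_derivable; apply: differentiable_dotv.
move=> h h_gt0 _; rewrite mul0r -dotvBr.
by have := gradient_monotone x (h *: v + x); rewrite addrK dotvZr dotvC pmulr_rge0.
Qed.

End Derivatives.

(* The arithmetic core of injectivity, read with c_i = (x, h_i), p_i = rho(t_i),
   F = f(t1), X = |x - t1|^2, Y = |x|^2 and P = |t1 - t2|^2. *)
Lemma tangent_balls_sqdist_le0 (R : realFieldType) (Rr p1 p2 h1 h2 F X Y P : R) :
  0 < Rr -> 0 <= p1 -> 0 < F -> 0 <= P -> h1 <= h2 ->
  X + (h1 - F) ^+ 2 = p1 ^+ 2 ->
  Y + h1 ^+ 2 = (Rr + p1) ^+ 2 -> Y + h2 ^+ 2 = (Rr + p2) ^+ 2 ->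
  p2 ^+ 2 + P <= X + (h2 - (F + (h2 - h1))) ^+ 2 ->
  p2 ^+ 2 + P <= X + (h2 - F) ^+ 2 ->
  P <= 0.
Proof.
move=> Rr_gt0 p1_ge0 F_gt0 P_ge0 h12 D1 S1 S2 B1 B2.
have : 0 <= F * (h2 - h1) by rewrite mulr_ge0 ?subr_ge0 // ltW.
move=> Fh_ge0; have : 0 <= Rr * (p2 - p1) by lra.
rewrite pmulr_rge0 // subr_ge0 => p12.
have : p1 * p1 <= p2 * p2 by apply: ler_pM.
lra.
Qed.

Section TangentBalls.
Variables (R : realType) (n : nat) (Rr : R) (f : 'rV[R]_n -> R^o).
Local Notation V := 'rV[R]_n.
Local Notation grad := (gradient f).
Hypothesis Rr_gt0 : 0 < Rr.
Hypothesis f_gt0 : forall t, 0 < f t.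
Hypothesis f_diff : forall t, differentiable f t.
Hypothesis f_convex : convex_function setT (f : convex_lmodType V -> R^o).
Hypothesis graph_outside_ball : forall t, Rr ^+ 2 < sqnorm t + f t ^+ 2.

Definition nlen t := Num.sqrt (1 + sqnorm (grad t)).
Definition kappa t :=
  (1 / (2 * nlen t)) * ((sqnorm t + f t ^+ 2 - Rr ^+ 2) / (Rr - alpha f t)).
Definition radius t := kappa t * nlen t.
Definition height t := f t - kappa t.

Lemma xmapE t : xmap Rr f t = t + kappa t *: grad t.
Proof. by []. Qed.

Lemma nlen_gt0 t : 0 < nlen t.
Proof. by rewrite sqrtr_gt0 ltr_wpDr ?sqnorm_ge0. Qed.
Lemma nlen_sqr t : nlen t ^+ 2 = 1 + sqnorm (grad t).
Proof. by rewrite sqr_sqrtr // addr_ge0 ?sqnorm_ge0. Qed.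
Lemma alpha_nlen t : alpha f t * nlen t = dotv t (grad t) - f t.
Proof. by rewrite /alpha -/(nlen t) divfK // gt_eqF // nlen_gt0. Qed.

Lemma kappa_gt0 t : alpha f t < Rr -> 0 < kappa t.
Proof.
by move=> ht; rewrite /kappa mulr_gt0 ?divr_gt0 ?mulr_gt0 ?nlen_gt0 ?subr_gt0.
Qed.
Lemma radius_gt0 t : alpha f t < Rr -> 0 < radius t.
Proof. by move=> ht; rewrite mulr_gt0 ?kappa_gt0 ?nlen_gt0. Qed.

Lemma graph_excessE t : alpha f t < Rr ->
  sqnorm t + f t ^+ 2 - Rr ^+ 2 = 2 * radius t * (Rr - alpha f t).
Proof.
move=> ht; have s0 : nlen t != 0 by rewrite gt_eqF // nlen_gt0.
have a0 : Rr - alpha f t != 0 by rewrite gt_eqF // subr_gt0.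
by rewrite /radius /kappa; field; rewrite s0 a0.
Qed.

Lemma center_sqnorm t : alpha f t < Rr ->
  sqnorm (xmap Rr f t) + height t ^+ 2 = (Rr + radius t) ^+ 2.
Proof.
move=> ht; have := graph_excessE ht; have := alpha_nlen t; have := nlen_sqr t.
rewrite xmapE sqnormD sqnormZ dotvZr /height /radius.
set s := nlen t; set a := alpha f t; set k := kappa t; set G := sqnorm (grad t).
set d := dotv t (grad t); set T := sqnorm t; set F := f t.
move=> eG ea eQ.
have -> : T + 2 * (k * d) + k ^+ 2 * G + (F - k) ^+ 2 =
  (T + F ^+ 2 - Rr ^+ 2) + Rr ^+ 2 + 2 * k * (d - F) + k ^+ 2 * (1 + G) by ring.
by rewrite eQ -ea -eG; ring.
Qed.

Lemma center_graph_sqdist t :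
  sqnorm (xmap Rr f t - t) + (height t - f t) ^+ 2 = radius t ^+ 2.
Proof.
rewrite xmapE (addrC t) addrK sqnormZ /height /radius [(kappa t * _) ^+ 2]exprMn nlen_sqr; ring.
Qed.

Lemma tangent_ball_below_epigraph t u z : alpha f t < Rr -> f u <= z ->
  radius t ^+ 2 + sqnorm (u - t) <= sqnorm (xmap Rr f t - u) + (height t - z) ^+ 2.
Proof.
move=> ht fu_le.
have cvx := convex_gradient_le f_diff f_convex t u.
have k_gt0 := kappa_gt0 ht.
have -> : xmap Rr f t - u = kappa t *: grad t - (u - t).
  by rewrite xmapE opprB addrA (addrC t).
rewrite (sqnormB (kappa t *: grad t)) sqnormZ dotvZl /height /radius [(kappa t * _) ^+ 2]exprMn nlen_sqr.
set w := u - t in cvx *; set k := kappa t; set G := sqnorm (grad t).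
set d := z - f t.
have dge : dotv (grad t) w <= d by rewrite /d lerBrDl (le_trans cvx fu_le).
have -> : f t - k - z = - (k + d) by rewrite /d; ring.
rewrite -subr_ge0.
have -> : k ^+ 2 * G - 2 * (k * dotv (grad t) w) + sqnorm w + (- (k + d)) ^+ 2 -
   (k ^+ 2 * (1 + G) + sqnorm w) = d ^+ 2 + 2 * k * (d - dotv (grad t) w) by ring.
apply: addr_ge0; first exact: sqr_ge0.
by apply: mulr_ge0; [apply: mulr_ge0 => //; exact: ltW | rewrite subr_ge0].
Qed.

Lemma xmap_inj_height t1 t2 : alpha f t1 < Rr -> alpha f t2 < Rr ->
  height t1 <= height t2 -> xmap Rr f t1 = xmap Rr f t2 -> t1 = t2.
Proof.
move=> ht1 ht2 h12 e.
have D1 : sqnorm (xmap Rr f t2 - t1) + (height t1 - f t1) ^+ 2 = radius t1 ^+ 2.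
  by rewrite -e; exact: center_graph_sqdist.
have S1 : sqnorm (xmap Rr f t2) + height t1 ^+ 2 = (Rr + radius t1) ^+ 2.
  by rewrite -e; exact: center_sqnorm.
have lifted : f t1 <= f t1 + (height t2 - height t1) by rewrite lerDl subr_ge0.
have := tangent_balls_sqdist_le0 Rr_gt0 (ltW (radius_gt0 ht1)) (f_gt0 t1)
  (sqnorm_ge0 (t1 - t2)) h12 D1 S1 (center_sqnorm ht2)
  (tangent_ball_below_epigraph ht2 lifted)
  (tangent_ball_below_epigraph ht2 (lexx (f t1))).
move=> P_le0; apply/eqP; rewrite -subr_eq0; apply/eqP/sqnorm_eq0.
by apply/eqP; rewrite eq_le P_le0 sqnorm_ge0.
Qed.

Lemma xmap_inj t1 t2 : alpha f t1 < Rr -> alpha f t2 < Rr ->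
  xmap Rr f t1 = xmap Rr f t2 -> t1 = t2.
Proof.
move=> ht1 ht2 e; have [h12|/ltW h21] := lerP (height t1) (height t2).
  exact: xmap_inj_height.
exact: esym (xmap_inj_height ht2 ht1 h21 (esym e)).
Qed.

Definition graph_sqdist (y : V) (h : R) (u : V) : R := sqnorm (y - u) + (h - f u) ^+ 2.

Lemma graph_sqdistE y h :
  (graph_sqdist y h : V -> R^o) = fun z => dotv (y - z) (y - z) + (h - f z) * (h - f z).
Proof. by apply/funext => z; rewrite /graph_sqdist expr2. Qed.

Lemma differentiable_graph_sqdist y h u :
  differentiable (graph_sqdist y h : V -> R^o) u.
Proof.
rewrite graph_sqdistE; apply: differentiableD.
  by apply: differentiable_dotv; exact: differentiable_subl.
by apply: differentiableM; apply: differentiableB => //; exact: differentiable_cst.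
Qed.

Lemma derive_graph_sqdist y h t v : 'D_v (graph_sqdist y h : V -> R^o) t =
  - 2 * dotv (y - t) v - 2 * (h - f t) * dotv (grad t) v.
Proof.
have dh : differentiable (fun z => h - f z : R^o) t.
  by apply: differentiableB => //; exact: differentiable_cst.
rewrite graph_sqdistE deriveD_diff; last by apply: differentiableM.
  rewrite derive_dotv ?differentiable_subl // derive_subl deriveM_diff //.
  rewrite (deriveB_diff (a := fun _ => h : R^o) (b := f)) //.
  rewrite derive_cst (derive_gradient f_diff) dotvNr dotvNl (dotvC v); ring.
by apply: differentiable_dotv; apply: differentiable_subl.
Qed.

Lemma graph_sqdist_has_min y h :
  exists u0, forall u, graph_sqdist y h u0 <= graph_sqdist y h u.
Proof.
set M := `|h - f y| + 1.
have M_gt0 : 0 < M by rewrite /M ltr_wpDl.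
pose A := [set u : V | forall i, `[y 0 i - M, y 0 i + M]%classic (u 0 i)].
have A_compact : compact A.
  apply: (@rV_compact _ _ (fun i => `[y 0 i - M, y 0 i + M]%classic)) => i.
  exact: segment_compact.
have yA : A y by move=> i /=; rewrite in_itv /= lerBlDr lerDl ltW //= lerDl ltW.
have A0 : A !=set0 by exists y.
have d_cont : continuous (graph_sqdist y h) :=
  fun u => differentiable_continuous (differentiable_graph_sqdist y h u).
have [c cA c_min] := EVT_min_rV A0 A_compact (continuous_subspaceT d_cont).
exists c => u; have [uA|uA] := pselect (A u); first by apply: c_min; rewrite inE.
have cy : graph_sqdist y h c <= graph_sqdist y h y by apply: c_min; rewrite inE.
apply: (le_trans cy).
move/existsNP: uA => [i /negP]; rewrite in_itv /= negb_and -!ltNge => uI.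
have Mi : M ^+ 2 < (y - u) 0 i ^+ 2 by rewrite !mxE; case/orP: uI => ?; nra.
rewrite /graph_sqdist subrr sqnorm0 add0r.
apply: le_trans (_ : M ^+ 2 <= _); last first.
  apply: le_trans (ltW (lt_le_trans Mi (sqr_coord_le_sqnorm _ i))) _.
  by rewrite lerDl sqr_ge0.
rewrite /M -(real_normK (num_real (h - f y))) ler_pXn2r ?inE ?normr_ge0 ?addr_ge0 //.
- by rewrite lerDl.
- by rewrite nnegrE addr_ge0.
Qed.

Lemma sqrt_graph_sqdist_lipschitz y h h' u :
  `|Num.sqrt (graph_sqdist y h u) - Num.sqrt (graph_sqdist y h' u)| <= `|h - h'|.
Proof.
have := sqrt_addr_sqr_lipschitz (h - f u) (h' - f u) (sqnorm_ge0 (y - u)).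
by rewrite (_ : h - f u - (h' - f u) = h - h') //; ring.
Qed.

Lemma graph_sqdist_argmin y h t :
  (forall u, graph_sqdist y h t <= graph_sqdist y h u) ->
  y = t + (f t - h) *: grad t.
Proof.
move=> t_min; set k := f t - h; set w := y - t - k *: grad t.
have Dw : 'D_w (graph_sqdist y h : V -> R^o) t = 0.
  apply: derive_eq0_min; first exact: differentiable_graph_sqdist.
  by move=> a; exact: t_min.
have w2 : sqnorm w = dotv (y - t) w - k * dotv (grad t) w.
  by rewrite /sqnorm {1}/w (dotvBl (y - t)) dotvZl.
move: Dw; rewrite derive_graph_sqdist (_ : h - f t = - k); last by rewrite /k; ring.
move=> Dw; have /sqnorm_eq0/eqP : sqnorm w = 0 by lra.
by rewrite subr_eq0 subr_eq => /eqP ->; exact: addrC.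
Qed.

Lemma graph_sqdist_argmin_above y h t : h < f y ->
  (forall u, graph_sqdist y h t <= graph_sqdist y h u) -> h < f t.
Proof.
move=> hy t_min; rewrite ltNge; apply/negP => ft_le.
pose l a := f (a *: (t - y) + y).
have l_cont : continuous l.
  by move=> a; apply: differentiable_continuous; apply: differentiable_comp.
have l01 : Num.min (l 0) (l 1) <= h <= Num.max (l 0) (l 1).
  rewrite /l scale0r add0r scale1r subrK ge_min le_max.
  by apply/andP; split; apply/orP; [right | left; exact: ltW].
have [a aI la] := IVT ler01 (continuous_subspaceT l_cont) l01.
move: aI; rewrite in_itv /= => /andP[a_ge0 a_le1].
have sq_le : (h - f t) ^+ 2 <= 0.
  have := t_min (a *: (t - y) + y).
  rewrite /graph_sqdist (_ : f (a *: (t - y) + y) = h) // subrr expr0n /= addr0.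
  rewrite (_ : y - (a *: (t - y) + y) = - (a *: (t - y))); last first.
    by rewrite opprD addrCA subrr addr0.
  rewrite sqnormN sqnormZ -[t - y]opprB sqnormN.
  have : a ^+ 2 * sqnorm (y - t) <= sqnorm (y - t).
    by rewrite ler_piMl ?sqnorm_ge0 // expr_le1.
  lra.
have ft : f t = h.
  apply/eqP; rewrite eq_sym -subr_eq0 -sqrf_eq0 eq_le sq_le.
  exact: sqr_ge0.
have := graph_sqdist_argmin t_min; rewrite ft subrr scale0r addr0 => yt.
by move: hy; rewrite yt ft ltxx.
Qed.

Section GraphGap.
Variables (y : V) (U : R -> V).
Hypothesis U_min : forall h u, graph_sqdist y h (U h) <= graph_sqdist y h u.

Definition graph_gap h :=
  Num.sqrt (graph_sqdist y h (U h)) - Num.sqrt (sqnorm y + h ^+ 2) + Rr.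

Lemma graph_gap_lipschitz h h' : `|graph_gap h - graph_gap h'| <= 2 * `|h - h'|.
Proof.
have dist_le a b : Num.sqrt (graph_sqdist y a (U a)) <=
    Num.sqrt (graph_sqdist y b (U b)) + `|a - b|.
  apply: le_trans (_ : Num.sqrt (graph_sqdist y a (U b)) <= _).
    by rewrite ler_sqrt ?U_min // addr_ge0 ?sqnorm_ge0 ?sqr_ge0.
  have := sqrt_graph_sqdist_lipschitz y a b (U b).
  have := ler_norm (Num.sqrt (graph_sqdist y a (U b)) - Num.sqrt (graph_sqdist y b (U b))).
  lra.
have le1 := dist_le h h'; have le2 := dist_le h' h; rewrite distrC in le2.
have := sqrt_addr_sqr_lipschitz h h' (sqnorm_ge0 y).
rewrite /graph_gap !ler_norml => /andP[AB1 AB2]; apply/andP; split; lra.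
Qed.

Lemma continuous_graph_gap : continuous graph_gap.
Proof.
move=> h; apply/cvgrPdist_lt => e e_gt0; near=> h'.
apply: le_lt_trans (graph_gap_lipschitz h h') _.
have : `|h - h'| < e / 2.
  near: h'; apply/nbhs_ballP; exists (e / 2) => /=; first by rewrite divr_gt0.
  by move=> z; rewrite /ball /=.
lra.
Unshelve. all: by end_near. Qed.

Lemma graph_gap_low_gt0 : 0 < graph_gap (- (sqnorm y / Rr) - 1).
Proof.
set hl := - (sqnorm y / Rr) - 1; set u := U hl.
have yR : 0 <= sqnorm y / Rr by rewrite divr_ge0 ?sqnorm_ge0 // ltW.
have Rh : 0 < Rr - hl by move: yR Rr_gt0; rewrite /hl; lra.
have dist_ge : f u - hl <= Num.sqrt (graph_sqdist y hl u).
  apply: le_trans (_ : `|hl - f u| <= _); first by rewrite distrC ler_norm.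
  rewrite -sqrtr_sqr ler_sqrt /graph_sqdist ?lerDr ?sqnorm_ge0 //.
  by rewrite addr_ge0 ?sqnorm_ge0 ?sqr_ge0.
have norm_lt : Num.sqrt (sqnorm y + hl ^+ 2) < Rr - hl.
  rewrite -(ger0_norm (ltW Rh)) -sqrtr_sqr ltr_sqrt ?exprn_gt0 //.
  have e : Rr * hl = - sqnorm y - Rr by rewrite /hl; field; rewrite gt_eqF.
  move: Rr_gt0 (sqnorm_ge0 y) (sqr_ge0 Rr); lra.
have := f_gt0 u; rewrite /graph_gap -/u; lra.
Qed.

Lemma graph_gap_lt0 : graph_gap (f y) < 0.
Proof.
have d0 : graph_sqdist y (f y) y = 0 by rewrite /graph_sqdist !subrr sqnorm0 expr0n /= addr0.
have dist_le0 : Num.sqrt (graph_sqdist y (f y) (U (f y))) <= 0.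
  by rewrite -sqrtr0 -d0 ler_sqrt ?U_min // d0.
have norm_gt : Rr < Num.sqrt (sqnorm y + f y ^+ 2).
  have hy := graph_outside_ball y.
  rewrite -(ger0_norm (ltW Rr_gt0)) -sqrtr_sqr ltr_sqrt //.
  by apply: le_lt_trans hy; rewrite sqr_ge0.
rewrite /graph_gap; lra.
Qed.

Lemma graph_gap_root : exists2 h, h < f y & graph_gap h = 0.
Proof.
set hl := - (sqnorm y / Rr) - 1.
have hl_le : hl <= f y.
  have := f_gt0 y; have : 0 <= sqnorm y / Rr by rewrite divr_ge0 ?sqnorm_ge0 // ltW.
  rewrite /hl; lra.
have sgn : Num.min (graph_gap hl) (graph_gap (f y)) <= 0 <=
    Num.max (graph_gap hl) (graph_gap (f y)).
  rewrite ge_min le_max; apply/andP; split; apply/orP; [right | left]; apply: ltW.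
    exact: graph_gap_lt0.
  exact: graph_gap_low_gt0.
have [h hI gap0] := IVT hl_le (continuous_subspaceT continuous_graph_gap) sgn.
move: hI; rewrite in_itv /= => /andP[_ h_le].
exists h => //; rewrite lt_neqAle h_le andbT; apply/eqP => hE.
by have := graph_gap_lt0; rewrite -hE gap0 ltxx.
Qed.

End GraphGap.

Lemma tangent_sphere_converse t k : 0 < k ->
  sqnorm (t + k *: grad t) + (f t - k) ^+ 2 = (Rr + k * nlen t) ^+ 2 ->
  alpha f t < Rr /\ kappa t = k.
Proof.
move=> k_gt0 sph.
have s_gt0 := nlen_gt0 t.
have excess : sqnorm t + f t ^+ 2 - Rr ^+ 2 = 2 * (k * nlen t) * (Rr - alpha f t).
  move: sph; rewrite sqnormD sqnormZ dotvZr.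
  have := alpha_nlen t; have := nlen_sqr t.
  set s := nlen t; set a := alpha f t; set d := dotv t (grad t).
  set G := sqnorm (grad t).
  move=> es ea; rewrite (_ : G = s ^+ 2 - 1); last by rewrite es; ring.
  have : k * (a * s) = k * (d - f t) by rewrite ea.
  lra.
have a_lt : alpha f t < Rr.
  have : 0 < 2 * (k * nlen t) * (Rr - alpha f t) by rewrite -excess subr_gt0.
  by rewrite pmulr_rgt0 ?mulr_gt0 // subr_gt0.
split=> //; rewrite /kappa excess; field.
by rewrite (gt_eqF s_gt0) subr_eq0 (gt_eqF a_lt).
Qed.

Lemma xmap_surj y : exists2 t, alpha f t < Rr & xmap Rr f t = y.
Proof.
have [U U_min] := choice (graph_sqdist_has_min y).
have [h h_lt gap0] := graph_gap_root U_min.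
set t := U h; set k := f t - h.
have yE : y = t + k *: grad t := graph_sqdist_argmin (U_min h).
have k_gt0 : 0 < k by rewrite subr_gt0; exact: graph_sqdist_argmin_above h_lt (U_min h).
have dist_t : Num.sqrt (graph_sqdist y h t) = k * nlen t.
  rewrite /graph_sqdist {1}yE (addrC t) addrK sqnormZ (_ : h - f t = - k); last first.
    by rewrite /k; ring.
  have -> : k ^+ 2 * sqnorm (grad t) + (- k) ^+ 2 = (k * nlen t) ^+ 2.
    by rewrite [(k * _) ^+ 2]exprMn nlen_sqr; ring.
  by rewrite sqrtr_sqr ger0_norm //; exact: mulr_ge0 (ltW k_gt0) (ltW (nlen_gt0 t)).
have sph : sqnorm (t + k *: grad t) + (f t - k) ^+ 2 = (Rr + k * nlen t) ^+ 2.
  rewrite -yE (_ : f t - k = h); last by rewrite /k; ring.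
  have <- : Num.sqrt (sqnorm y + h ^+ 2) = Rr + k * nlen t.
    by move: gap0; rewrite /graph_gap -/t dist_t; lra.
  by rewrite sqr_sqrtr // addr_ge0 ?sqnorm_ge0 ?sqr_ge0.
have [a_lt kE] := tangent_sphere_converse k_gt0 sph.
by exists t => //; rewrite xmapE kE -yE.
Qed.

Hypothesis grad_diff : forall t, differentiable grad t.

Lemma differentiable_nlen x : differentiable (nlen : V -> R^o) x.
Proof.
apply: (differentiable_sqrt (a := fun z => 1 + sqnorm (grad z))).
  by apply: differentiableD => //; exact: differentiable_dotv.
by rewrite ltr_wpDr ?sqnorm_ge0.
Qed.

Lemma differentiable_alpha x : differentiable (alpha f : V -> R^o) x.
Proof.
have -> : (alpha f : V -> R^o) = fun z => (dotv z (grad z) - f z) * (nlen z)^-1 by [].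
apply: differentiableM; first by apply: differentiableB => //; exact: differentiable_dotv.
by apply: differentiableV; [exact: differentiable_nlen | rewrite gt_eqF // nlen_gt0].
Qed.

Lemma differentiable_kappa x : alpha f x < Rr -> differentiable (kappa : V -> R^o) x.
Proof.
move=> hx; have dn := differentiable_nlen x; have da := differentiable_alpha x.
have dT := differentiable_sqnorm x.
have df2 : differentiable (fun z => f z ^+ 2 : R^o) x.
  rewrite (_ : (fun z => _) = fun z => f z * f z); first exact: differentiableM.
  by apply/funext => z; exact: expr2.
apply: differentiableM.
  apply: differentiableM => //; apply: differentiableV; first exact: differentiableM.
  by rewrite mulf_neq0 // gt_eqF // nlen_gt0.
apply: differentiableM.
  by apply: differentiableB => //; exact: differentiableD.
by apply: differentiableV; [exact: differentiableB | rewrite subr_eq0 gt_eqF].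
Qed.

Lemma differentiable_xmap x : alpha f x < Rr -> differentiable (xmap Rr f) x.
Proof.
move=> hx.
have -> : xmap Rr f =
    fun z => z + \sum_(i < n) ((kappa z * grad z 0 i) *: (delta_mx 0 i : V)).
  apply/funext => z; rewrite xmapE {1}(row_sum_delta (grad z)) scaler_sumr.
  by congr (_ + _); apply: eq_bigr => i _; rewrite scalerA.
apply: differentiableD => //.
have -> : (fun z => \sum_(i < n) ((kappa z * grad z 0 i) *: (delta_mx 0 i : V))) =
    \sum_(i < n) (fun z => (kappa z * grad z 0 i) *: (delta_mx 0 i : V)).
  by apply/funext => z; rewrite fct_sumE.
apply: differentiable_sum => i.
apply: (differentiableZl (k := fun z => kappa z * grad z 0 i : R^o)).
by apply: differentiableM; [exact: differentiable_kappa | exact: differentiable_entry].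
Qed.

Lemma derive_xmap x v : alpha f x < Rr ->
  'D_v (xmap Rr f) x = v + kappa x *: 'D_v grad x + 'D_v (kappa : V -> R^o) x *: grad x.
Proof.
move=> hx; apply/rowP => j.
have dk := differentiable_kappa hx.
have dg : differentiable (fun z => grad z 0 j : R^o) x by exact: differentiable_entry.
rewrite -(derive_entry j v (differentiable_xmap hx)).
have -> : (fun z => xmap Rr f z 0 j : R^o) = fun z => z 0 j + kappa z * grad z 0 j.
  by apply/funext => z; rewrite xmapE !mxE.
have dkg : differentiable (fun z => kappa z * grad z 0 j : R^o) x.
  exact: differentiableM.
have dc : differentiable (fun z : V => z 0 j : R^o) x by exact: differentiable_coord.
by rewrite deriveD_diff // derive_coord deriveM_diff // derive_entry // !mxE; ring.
Qed.

Lemma derive_nlen x v :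
  'D_v (nlen : V -> R^o) x = dotv (grad x) ('D_v grad x) / nlen x.
Proof.
have dn := differentiable_nlen x.
have dG : differentiable (fun z => sqnorm (grad z) : R^o) x by exact: differentiable_dotv.
have dnn : differentiable (fun z => nlen z * nlen z : R^o) x by exact: differentiableM.
have : 'D_v (fun z => nlen z * nlen z - sqnorm (grad z) : R^o) x = 0.
  rewrite (_ : (fun z => _) = fun _ => 1); first exact: derive_cst.
  by apply/funext => z; rewrite -expr2 nlen_sqr addrK.
rewrite (deriveB_diff (a := fun z => nlen z * nlen z : R^o)) //.
rewrite deriveM_diff // /sqnorm derive_dotv // (dotvC ('D_v grad x)) => E.
have s0 : nlen x != 0 by rewrite gt_eqF // nlen_gt0.
apply: (mulfI s0); rewrite mulrCA divff // mulr1.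
have two0 : (2 : R) != 0 by rewrite pnatr_eq0.
by apply: (mulfI two0); apply/eqP; rewrite -subr_eq0 -E; apply/eqP; ring.
Qed.

Lemma kappa_identity z : alpha f z < Rr ->
  2 * kappa z * (nlen z * Rr - dotv z (grad z) + f z) =
  sqnorm z + f z * f z - Rr ^+ 2.
Proof.
move=> hz; rewrite (_ : dotv z (grad z) = alpha f z * nlen z + f z); last first.
  by rewrite alpha_nlen; ring.
by rewrite -expr2 (graph_excessE hz) /radius; ring.
Qed.

Lemma derive_kappa_identity x v : alpha f x < Rr ->
  2 * kappa x * (Rr * (dotv (grad x) ('D_v grad x) / nlen x) - dotv x ('D_v grad x))
  + 2 * 'D_v (kappa : V -> R^o) x * (nlen x * Rr - dotv x (grad x) + f x)
  = 2 * dotv x v + 2 * f x * dotv (grad x) v.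
Proof.
move=> hx.
have dk := differentiable_kappa hx; have dn := differentiable_nlen x.
have dT := differentiable_sqnorm x.
have dd : differentiable (fun z => dotv z (grad z) : R^o) x by exact: differentiable_dotv.
have dnR : differentiable (fun z => nlen z * Rr : R^o) x by exact: differentiableM.
have dnd : differentiable (fun z => nlen z * Rr - dotv z (grad z) : R^o) x.
  exact: differentiableB.
have dff : differentiable (fun z => f z * f z : R^o) x by exact: differentiableM.
have dTff : differentiable (fun z => sqnorm z + f z * f z : R^o) x.
  exact: differentiableD.
have d2k : differentiable (fun z => 2 * kappa z : R^o) x by exact: differentiableM.
have dndf : differentiable (fun z => nlen z * Rr - dotv z (grad z) + f z : R^o) x.
  exact: differentiableD.
have near_id : \forall z \near x, 2 * kappa z * (nlen z * Rr - dotv z (grad z) + f z) =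
    sqnorm z + f z * f z - Rr ^+ 2.
  have a_cont : alpha f @ x --> alpha f x := differentiable_continuous (differentiable_alpha x).
  near=> z; apply: kappa_identity; near: z; exact: cvgr_lt a_cont _ hx.
have := near_eq_derive v near_id.
rewrite (deriveM_diff (a := fun z => 2 * kappa z : R^o)) //.
rewrite (deriveM_diff (a := fun _ => 2 : R^o) (b := kappa)) // derive_cst.
rewrite (deriveD_diff (a := fun z => nlen z * Rr - dotv z (grad z) : R^o)) //.
rewrite (deriveB_diff (a := fun z => nlen z * Rr : R^o)) //.
rewrite (deriveM_diff (a := nlen) (b := fun _ => Rr : R^o)) // derive_cst.
rewrite derive_nlen (derive_dotv (F := id)) // derive_id (derive_gradient f_diff).
rewrite (deriveB_diff (a := fun z => sqnorm z + f z * f z : R^o)) // derive_cst.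
rewrite (deriveD_diff (a := fun z => sqnorm z : R^o)) //.
rewrite deriveM_diff // derive_sqnorm (derive_gradient f_diff) (dotvC v).
lra.
Unshelve. all: by end_near. Qed.

Lemma derive_kappa_kernel x v : alpha f x < Rr -> 'D_v (xmap Rr f) x = 0 ->
  'D_v (kappa : V -> R^o) x = dotv (grad x) v.
Proof.
move=> hx; rewrite derive_xmap // => Dv.
have I := derive_kappa_identity v hx.
have es : nlen x ^+ 2 = 1 + dotv (grad x) (grad x) := nlen_sqr x.
have s_gt0 := nlen_gt0 x; have F_gt0 := f_gt0 x.
move: Dv I es s_gt0 F_gt0.
set G := 'D_v grad x; set g := grad x; set K := kappa x; set s := nlen x.
set F := f x; set dK : R := 'D_v (kappa : V -> R^o) x.
move=> Dv I es s_gt0 F_gt0.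
have Eg : dotv g v + K * dotv g G + dK * dotv g g = 0.
  by have := congr1 (dotv g) Dv; rewrite !dotvDr !dotvZr dotv0r.
have Ex : dotv x v + K * dotv x G + dK * dotv x g = 0.
  by have := congr1 (dotv x) Dv; rewrite !dotvDr !dotvZr dotv0r.
have key : (dK - dotv g v) * (Rr + F * s) = 0.
  transitivity (s / 2 * (2 * K * (Rr * (dotv g G / s) - dotv x G)
      + 2 * dK * (s * Rr - dotv x g + F) - (2 * dotv x v + 2 * F * dotv g v))
    + s * (dotv x v + K * dotv x G + dK * dotv x g)
    - Rr * (dotv g v + K * dotv g G + dK * dotv g g)
    - dK * Rr * (s ^+ 2 - 1 - dotv g g)).
    by field; rewrite gt_eqF.
  by rewrite I subrr Ex Eg es; ring.
move/eqP: key; rewrite mulf_eq0 => /orP[/eqP|]; first by move/eqP; rewrite subr_eq0 => /eqP.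
by rewrite gt_eqF // ltr_wpDr // ?mulr_ge0 // ltW.
Qed.

Lemma jacobian_kernel_eq0 x v : alpha f x < Rr -> 'D_v (xmap Rr f) x = 0 -> v = 0.
Proof.
move=> hx Dv; have dkE := derive_kappa_kernel hx Dv.
rewrite derive_xmap // dkE in Dv.
have := congr1 (dotv v) Dv; rewrite !dotvDr !dotvZr dotv0r (dotvC v (grad x)) => Ev.
have : 0 <= kappa x * dotv v ('D_v grad x).
  by rewrite mulr_ge0 ?(hessian_psd f_diff f_convex v (grad_diff x)) // ltW // kappa_gt0.
have := sqr_ge0 (dotv (grad x) v).
move=> sq_ge0 psd; apply: sqnorm_eq0; apply/eqP; rewrite eq_le sqnorm_ge0 andbT.
move: Ev sq_ge0 psd; rewrite /sqnorm; lra.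
Qed.

Lemma xmap_jacobian_det_neq0 x : alpha f x < Rr -> \det ('J (xmap Rr f) x) != 0.
Proof.
move=> hx; apply/negP => /det0P [v v_neq0 vJ].
have Dv : 'D_v (xmap Rr f) x = 0.
  by rewrite deriveEjacobian ?vJ //; exact: differentiable_xmap.
by move/eqP: v_neq0; apply; exact: jacobian_kernel_eq0 hx Dv.
Qed.

End TangentBalls.

Theorem theorem10 (R : realType) (n : nat) (Rr : R) (f : 'rV[R]_n -> R^o) :
  (0 < n)%N -> 0 < Rr ->
  (forall t, 0 < f t) ->
  C2 f ->
  convex_function setT (f : convex_lmodType 'rV[R]_n -> R^o) ->
  (forall t, Rr ^+ 2 < sqnorm t + f t ^+ 2) ->
  set_bij [set t | alpha f t < Rr] setT (xmap Rr f) /\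
  (forall t, alpha f t < Rr ->
     differentiable (xmap Rr f) t /\ \det ('J (xmap Rr f) t) != 0).
Proof.
move=> _ Rr_gt0 f_gt0 [f_diff [grad_diff _]] f_convex outside.
split; first split.
- by move=> t _.
- by move=> t1 t2; rewrite !inE => ht1 ht2; apply: xmap_inj.
- by move=> y _; have [t ht <-] := xmap_surj Rr_gt0 f_gt0 f_diff outside y; exists t.
move=> t ht; split; first exact: differentiable_xmap.
exact: xmap_jacobian_det_neq0.
Qed.
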